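(* Let $T$ be a $J$-unitary operator on ${\cal K}$. Then $$\Re e\,V(T)=({\bf 1}+T)\bigl({\bf 1}+T^*T\bigr)^{-1}({\bf 1}+T)^*-{\bf 1},$$ where $\Re e\,V(T)=\tfrac12(V(T)+V(T)^* )$.
   Context: ${\cal H}$ is a separable complex Hilbert space, ${\cal K}={\cal H}\oplus{\cal H}$, $J=\begin{pmatrix}{\bf 1}&0\\0&-{\bf 1}\end{pmatrix}$. A bounded invertible $T$ on ${\cal K}$ is $J$-unitary if $T^*JT=J$; writing $T=\begin{pmatrix}a&b\\c&d\end{pmatrix}$ the blocks $a,d$ are invertible. $V(T)$ denotes the unitary $\begin{pmatrix}(a^* )^{-1}&bd^{-1}\\-d^{-1}c&d^{-1}\end{pmatrix}$. *)

From HB Require Import structures.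
From mathcomp Require Import all_boot all_order all_algebra.
From mathcomp Require Import complex.
From mathcomp Require Import reals.
Set Implicit Arguments. Unset Strict Implicit. Unset Printing Implicit Defensive.
Import Order.TTheory GRing.Theory Num.Theory.
Local Open Scope ring_scope.

Section Hilbert.
Variable R : realType.
Local Notation C := R[i].

Section Space.
Variable H : lmodType C.
Variable ip : H -> H -> C.  (* inner product, linear in the first argument *)

Definition nrm2 (x : H) : C := ip x x.

Definition is_inner_product : Prop :=
  [/\ (forall (k : C) (x y z : H), ip (k *: x + y) z = k * ip x z + ip y z),
      (forall x y : H, ip y x = conjc (ip x y)),
      (forall x : H, 0 <= ip x x) &
      (forall x : H, ip x x = 0 -> x = 0)].

Definition cauchy_seq (u : nat -> H) : Prop :=
  forall e : C, 0 < e -> exists N : nat, forall m n : nat,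
    (N <= m)%N -> (N <= n)%N -> nrm2 (u m - u n) < e.

Definition converges_to (u : nat -> H) (l : H) : Prop :=
  forall e : C, 0 < e -> exists N : nat, forall n : nat,
    (N <= n)%N -> nrm2 (u n - l) < e.

Definition complete_space : Prop :=
  forall u : nat -> H, cauchy_seq u -> exists l, converges_to u l.

Definition separable_space : Prop :=
  exists s : nat -> H, forall (x : H) (e : C), 0 < e ->
    exists n : nat, nrm2 (x - s n) < e.

Definition separable_hilbert : Prop :=
  [/\ is_inner_product, complete_space & separable_space].

Definition bounded_op (A : H -> H) : Prop :=
  (forall (k : C) (x y : H), A (k *: x + y) = k *: A x + A y) /\
  exists M : C, forall x : H, nrm2 (A x) <= M * nrm2 x.

Definition is_adjoint (A B : H -> H) : Prop :=
  forall x y : H, ip (A x) y = ip x (B y).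

Definition is_inverse (A B : H -> H) : Prop :=
  (forall x, B (A x) = x) /\ (forall x, A (B x) = x).

End Space.

Section Sum.
Variable H : lmodType C.
Variable ip : H -> H -> C.

Definition Kspace := (H * H)%type.

Definition ipK (z w : Kspace) : C := ip z.1 w.1 + ip z.2 w.2.

Definition Jop (z : Kspace) : Kspace := (z.1, - z.2).

(* blocks of T = [[a, b], [c, d]] *)
Definition blk_a (T : Kspace -> Kspace) (x : H) : H := (T (x, 0)).1.
Definition blk_b (T : Kspace -> Kspace) (y : H) : H := (T (0, y)).1.
Definition blk_c (T : Kspace -> Kspace) (x : H) : H := (T (x, 0)).2.
Definition blk_d (T : Kspace -> Kspace) (y : H) : H := (T (0, y)).2.

Definition J_unitary (T Tst : Kspace -> Kspace) : Prop :=
  [/\ bounded_op ipK T,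
      (exists Ti, bounded_op ipK Ti /\ is_inverse T Ti),
      is_adjoint ipK T Tst &
      (forall z, Tst (Jop (T z)) = Jop z)].

(* V(T) = [[ inverse of adjoint(a), b d^{-1} ], [ -d^{-1} c, d^{-1} ]],
   given ainvs = inverse of adjoint(a), and dinv = d^{-1}. *)
Definition Vop (T : Kspace -> Kspace) (ainvs dinv : H -> H) (z : Kspace) : Kspace :=
  (ainvs z.1 + blk_b T (dinv z.2), - dinv (blk_c T z.1) + dinv z.2).

End Sum.
End Hilbert.

From HB Require Import structures.
From mathcomp Require Import all_boot all_order all_algebra.
From mathcomp Require Import complex.
From mathcomp Require Import reals.
Import Order.TTheory GRing.Theory Num.Theory.
Local Open Scope ring_scope.
Set Implicit Arguments.
Unset Strict Implicit.
Unset Printing Implicit Defensive.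

(* V(T) maps the input (u1, (Tu)2) of u to its output ((Tu)1, u2), and the
   J-unitarity identity <Tu, JTv> = <u, Jv> says exactly that inputs and outputs
   have the same inner products; as the inputs exhaust K (d is onto), V(T) is
   isometric.  The outputs have trivial orthogonal complement because T is onto
   and d is injective.
   Put s = (1 + T^*T)^-1 (1 + T)^* z.  Then <u + Tu, z> = <u, s> + <Tu, Ts> is
   the sum of the inner products of the inputs and of the outputs of u and s,
   hence twice either of them.  Testing against inputs gives
   V(T)^* z + z = 2 (s1, (Ts)2), testing against outputs gives
   V(T) z + z = 2 ((Ts)1, s2), and adding, Re V(T) z = s + Ts - z. *)

Section InnerProduct.
Variables (R : realType) (V : lmodType R[i]) (ip : V -> V -> R[i]).
Hypothesis hip : is_inner_product ip.

Lemma ipDl x y z : ip (x + y) z = ip x z + ip y z.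
Proof. by case: hip => lin _ _ _; rewrite -[x]scale1r lin mul1r scale1r. Qed.

Lemma ip0l z : ip 0 z = 0.
Proof. by apply: (addrI (ip 0 z)); rewrite -ipDl !addr0. Qed.

Lemma ipNl x z : ip (- x) z = - ip x z.
Proof. by apply: (addrI (ip x z)); rewrite -ipDl !subrr ip0l. Qed.

Lemma ipC x y : ip y x = conjc (ip x y).
Proof. by case: hip. Qed.

Lemma ipDr x y z : ip z (x + y) = ip z x + ip z y.
Proof. by rewrite ipC ipDl rmorphD /= -!ipC. Qed.

Lemma ipNr x z : ip z (- x) = - ip z x.
Proof. by rewrite ipC ipNl rmorphN /= -ipC. Qed.

Lemma ip0r z : ip z 0 = 0.
Proof. by rewrite ipC ip0l rmorph0. Qed.

Lemma ip_injr x y : (forall w, ip w x = ip w y) -> x = y.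
Proof.
case: hip => _ _ _ def xy; apply/subr0_eq/def.
by rewrite ipDr ipNr xy subrr.
Qed.

Lemma ip_injl x y : (forall w, ip x w = ip y w) -> x = y.
Proof. by move=> xy; apply: ip_injr => w; rewrite ipC xy -ipC. Qed.

Lemma adjoint_additive (A B : V -> V) : is_adjoint ip A B -> {morph A : x y / x + y}.
Proof. by move=> hA x y; apply: ip_injl => w; rewrite ipDl !hA ipDl. Qed.

End InnerProduct.

Section DirectSum.
Variables (R : realType) (H : lmodType R[i]) (ip : H -> H -> R[i]).
Local Notation K := (Kspace H).
Local Notation ipK := (ipK ip).

Lemma is_inner_product_ipK : is_inner_product ip -> is_inner_product ipK.
Proof.
case=> lin sym pos def; split.
- by move=> k [x1 x2] [y1 y2] [z1 z2]; rewrite /ipK /= !lin mulrDr addrACA.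
- by move=> [x1 x2] [y1 y2]; rewrite /ipK /= rmorphD /= -!sym.
- by move=> [x1 x2]; rewrite /ipK /= addr_ge0.
- move=> [x1 x2]; rewrite /ipK /= => /eqP; rewrite paddr_eq0 //.
  by case/andP=> /eqP/def -> /eqP/def ->.
Qed.

(* Input and output of the Potapov-Ginzburg transform V(T), which exchanges the
   second components of u and T u (see [Vop_pg_in]). *)
Definition pg_in (T : K -> K) (u : K) : K := (u.1, (T u).2).
Definition pg_out (T : K -> K) (u : K) : K := ((T u).1, u.2).

Lemma pg_out_add_in T u : pg_out T u + pg_in T u = u + T u.
Proof. by apply: injective_projections => //=; exact: addrC. Qed.

Lemma ipK_add_graph T u v :
  ipK u v + ipK (T u) (T v) = ipK (pg_out T u) (pg_out T v) + ipK (pg_in T u) (pg_in T v).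
Proof. by rewrite /ipK /= addrACA [RHS]addrACA [ip (T u).1 _ + _]addrC. Qed.

End DirectSum.

Section JUnitary.
Variables (R : realType) (H : lmodType R[i]) (ip : H -> H -> R[i]).
Hypothesis hip : is_inner_product ip.
Local Notation K := (Kspace H).
Local Notation ipK := (ipK ip).
Let hipK : is_inner_product ipK := is_inner_product_ipK hip.

Variables T Tst Ti : K -> K.
Hypothesis hTst : is_adjoint ipK T Tst.
Hypothesis hJ : forall z, Tst (Jop (T z)) = Jop z.
Hypothesis TiK : cancel Ti T.
Variable dinv : H -> H.
Hypothesis hdinv : is_inverse (blk_d T) dinv.

Lemma T_add : {morph T : x y / x + y}.
Proof. move=> x y; exact: (adjoint_additive hipK hTst x y). Qed.

Lemma T0 : T 0 = 0.
Proof. by apply: (addrI (T 0)); rewrite -T_add !addr0. Qed.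

Lemma T_opp x : T (- x) = - T x.
Proof. by apply: (addIr (T x)); rewrite -T_add !addNr T0. Qed.

Lemma T_blocks x y : T (x, y) = (blk_a T x + blk_b T y, blk_c T x + blk_d T y).
Proof.
have -> : (x, y) = (x, 0) + (0, y) :> K.
  by apply: injective_projections; rewrite /= ?addr0 ?add0r.
by rewrite T_add.
Qed.

Lemma T_second_add x y : T (0, x + y) = T (0, x) + T (0, y).
Proof. by rewrite -T_add; congr T; apply: injective_projections; rewrite /= ?addr0. Qed.

Lemma T_second_opp y : T (0, - y) = - T (0, y).
Proof. by rewrite -T_opp; congr T; apply: injective_projections; rewrite /= ?oppr0. Qed.

Lemma blk_bD x y : blk_b T (x + y) = blk_b T x + blk_b T y.
Proof. by rewrite /blk_b T_second_add. Qed.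

Lemma blk_dD x y : blk_d T (x + y) = blk_d T x + blk_d T y.
Proof. by rewrite /blk_d T_second_add. Qed.

Lemma dinvD x y : dinv (x + y) = dinv x + dinv y.
Proof.
case: hdinv => dK dK'.
by rewrite -{1}(dK' x) -{1}(dK' y) -blk_dD dK.
Qed.

Lemma dinv0 : dinv 0 = 0.
Proof. by apply: (addrI (dinv 0)); rewrite -dinvD !addr0. Qed.

(* J-unitarity, rearranged: <Tu, JTv> = <u, Jv>. *)
Lemma ipK_pg_out u v : ipK (pg_out T u) (pg_out T v) = ipK (pg_in T u) (pg_in T v).
Proof.
have := hTst u (Jop (T v)); rewrite hJ /ipK /Jop /pg_out /pg_in /= !(ipNr hip) => e.
by rewrite -[X in X + _](subrK (ip (T u).2 (T v).2)) e addrAC subrK.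
Qed.

Lemma pg_in_surj w : exists u, pg_in T u = w.
Proof.
case: w => w1 w2; exists (w1, dinv (w2 - blk_c T w1)).
by rewrite /pg_in T_blocks /= hdinv.2 subrKC.
Qed.

Lemma pg_in_ipK_inj x y : (forall u, ipK (pg_in T u) x = ipK (pg_in T u) y) -> x = y.
Proof. by move=> xy; apply: (ip_injr hipK) => w; have [u <-] := pg_in_surj w. Qed.

(* <pg_out u, x> = <u, T^*(x1, 0) + (0, x2)>, and T^* J = J T^-1. *)
Lemma pg_out_ortho_eq0 x : (forall u, ipK (pg_out T u) x = 0) -> x = 0.
Proof.
case: x => x1 x2 hx.
have hT0 : Tst (x1, 0) = - (0, x2).
  apply/eqP; rewrite -addr_eq0; apply/eqP/(ip_injr hipK) => u.
  rewrite (ipDr hipK) -hTst (ip0r hipK) /ipK /= !(ip0r hip) !addr0 add0r.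
  exact: hx u.
have hy : Ti (x1, 0) = (0, x2).
  have := hJ (Ti (x1, 0)); rewrite TiK /Jop /= oppr0 hT0.
  have -> : - (0, x2) = (0, - x2) :> K.
    by apply: injective_projections; rewrite /= ?oppr0.
  by case: (Ti _) => y1 y2 /= [<- /oppr_inj ->].
have hT : T (0, x2) = (x1, 0) by rewrite -hy TiK.
have x20 : x2 = 0 by rewrite -[x2]hdinv.1 /blk_d hT dinv0.
by rewrite x20 -hT x20 -[(0, 0)]/(0 : K) T0.
Qed.

Lemma pg_out_ipK_inj x y : (forall u, ipK (pg_out T u) x = ipK (pg_out T u) y) -> x = y.
Proof.
move=> xy; apply/subr0_eq/pg_out_ortho_eq0 => u.
by rewrite (ipDr hipK) (ipNr hipK) xy subrr.
Qed.

Section PotapovGinzburg.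
Variables as_ ainvs : H -> H.
Hypothesis has : is_adjoint ip (blk_a T) as_.
Hypothesis ainvsK : cancel as_ ainvs.
Local Notation V := (Vop T ainvs dinv).

Lemma blk_a_adjointE w : as_ w = (Tst (w, 0)).1.
Proof.
apply: (ip_injr hip) => v; rewrite -has /blk_a.
by have := hTst (v, 0) (w, 0); rewrite /ipK /= (ip0r hip) (ip0l hip) !addr0.
Qed.

(* The inverse of a^* is the Schur complement a - b d^-1 c: apply T^* J T = J to
   (x, - d^-1 c x), whose image under T has zero second component. *)
Lemma ainvsE x : ainvs x = blk_a T x - blk_b T (dinv (blk_c T x)).
Proof.
set y := dinv (blk_c T x).
have Txy : T (x, - y) = (blk_a T x - blk_b T y, 0).
  by rewrite T_blocks /blk_b /blk_d T_second_opp /= -/(blk_d T y) hdinv.2 subrr.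
have := hJ (x, - y); rewrite Txy /Jop /= oppr0 => e.
have asE : as_ (blk_a T x - blk_b T y) = x by rewrite blk_a_adjointE e.
by rewrite -[in LHS]asE ainvsK.
Qed.

Lemma Vop_pg_in u : V (pg_in T u) = pg_out T u.
Proof.
case: u => x y; rewrite /Vop /pg_in /pg_out /= T_blocks /=.
by rewrite dinvD hdinv.1 blk_bD ainvsE subrKA addKr.
Qed.

Lemma Vop_isometry x y : ipK (V x) (V y) = ipK x y.
Proof.
have [u <-] := pg_in_surj x; have [v <-] := pg_in_surj y.
by rewrite !Vop_pg_in ipK_pg_out.
Qed.

Variables S U W : K -> K.
Hypothesis SK : forall w, S w + Tst (T (S w)) = w.
Hypothesis hU : is_adjoint ipK (fun z => z + T z) U.
Hypothesis hW : is_adjoint ipK V W.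

Lemma ipK_resolvent u z :
  ipK (u + T u) z = ipK u (S (U z)) + ipK (T u) (T (S (U z))).
Proof. by rewrite (hU u z) -[in LHS](SK (U z)) (ipDr hipK) hTst. Qed.

Lemma Vop_adjoint_addr z : W z + z = pg_in T (S (U z)) + pg_in T (S (U z)).
Proof.
apply: pg_in_ipK_inj => u.
rewrite !(ipDr hipK) -hW Vop_pg_in -(ipDl hipK) pg_out_add_in.
by rewrite ipK_resolvent ipK_add_graph ipK_pg_out.
Qed.

Lemma Vop_addr z : V z + z = pg_out T (S (U z)) + pg_out T (S (U z)).
Proof.
apply: pg_out_ipK_inj => u.
rewrite !(ipDr hipK) -{1}(Vop_pg_in u) Vop_isometry -(ipDl hipK).
by rewrite [pg_in T u + _]addrC pg_out_add_in ipK_resolvent ipK_add_graph -ipK_pg_out.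
Qed.

Lemma Vop_add_adjoint z : V z + W z = (S (U z) + T (S (U z)) - z) *+ 2.
Proof.
rewrite -[V z](addrK z) -[W z](addrK z) Vop_addr Vop_adjoint_addr -pg_out_add_in.
by rewrite mulr2n addrACA [in RHS]addrACA (addrACA (pg_out _ _)).
Qed.

End PotapovGinzburg.
End JUnitary.

Lemma scaleV2rMn (F : numFieldType) (V : lmodType F) (v : V) : 2^-1 *: (v *+ 2) = v.
Proof. by rewrite -scaler_nat scalerA mulVf ?scale1r // pnatr_eq0. Qed.

Unset Implicit Arguments.

Theorem proposition3p21 (R : realType) (H : lmodType R[i]) (ip : H -> H -> R[i])
  (hH : separable_hilbert ip)
  (T Tst : Kspace H -> Kspace H) (hT : J_unitary ip T Tst)
  (* as_ = adjoint of a, ainvs = inverse of as_, dinv = inverse of d *)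
  (as_ ainvs dinv : H -> H)
  (has : is_adjoint ip (blk_a T) as_)
  (hainvs : is_inverse as_ ainvs)
  (hdinv : is_inverse (blk_d T) dinv)
  (* S = inverse of (1 + Tst T) *)
  (S : Kspace H -> Kspace H) (hS : is_inverse (fun z => z + Tst (T z)) S)
  (* W = adjoint of V(T),  U = adjoint of (1 + T) *)
  (W U : Kspace H -> Kspace H)
  (hW : is_adjoint (ipK ip) (Vop T ainvs dinv) W)
  (hU : is_adjoint (ipK ip) (fun z => z + T z) U) :
  forall z : Kspace H,
    2^-1 *: (Vop T ainvs dinv z + W z) =
    (S (U z) + T (S (U z))) - z.
Proof.
move=> z; have [hip _ _] := hH.
have [_ [Ti [_ [_ TiK]]] hTst hJ] := hT.
rewrite (Vop_add_adjoint hip hTst hJ TiK hdinv has hainvs.1 hS.2 hU hW).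
by rewrite scaleV2rMn.
Qed.
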